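(* For every positive integer $k$ there exists $c_k>0$ such that every graph $G$ on $n\geq 2$ vertices that contains neither the path $P_k$ nor its complement $\overline{P_k}$ as an induced subgraph contains two disjoint vertex sets $X,Y$, each of size at least $c_k\cdot n$, such that either every vertex of $X$ is adjacent to every vertex of $Y$, or no vertex of $X$ is adjacent to any vertex of $Y$ (no condition is imposed on edges inside $X$ or inside $Y$). Consequently, for every $k$ there exists $c'_k>0$ such that every graph on $n$ vertices with no induced $P_k$ and no induced $\overline{P_k}$ contains a clique or a stable set of size at least $n^{c'_k}$.
   Context: All graphs are finite and simple. $P_k$ denotes the path on $k$ vertices and $\overline{P_k}$ its complement graph. ''Contains $H$ as an induced subgraph'' means some subset of vertices induces a graph isomorphic to $H$. *)

From mathcomp Require Import all_boot.
From Stdlib Require Import Reals.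
Set Implicit Arguments. Unset Strict Implicit. Unset Printing Implicit Defensive.

Definition simple_graph (T : finType) (e : rel T) : Prop :=
  symmetric e /\ irreflexive e.

Definition path_rel (k : nat) : rel 'I_k :=
  fun i j => (i.+1 == j :> nat) || (j.+1 == i :> nat).

Arguments path_rel k : clear implicits.

Definition copath_rel (k : nat) : rel 'I_k :=
  fun i j => (i != j) && ~~ path_rel k i j.

Arguments copath_rel k : clear implicits.

Definition contains_induced (T : finType) (e : rel T) (k : nat) (h : rel 'I_k) : Prop :=
  exists f : 'I_k -> T, injective f /\ forall i j : 'I_k, i != j -> e (f i) (f j) = h i j.

Definition is_clique (T : finType) (e : rel T) (S : {set T}) : Prop :=
  forall x y, x \in S -> y \in S -> x != y -> e x y.

Definition is_stable (T : finType) (e : rel T) (S : {set T}) : Prop :=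
  forall x y, x \in S -> y \in S -> ~~ e x y.

Definition complete_pair (T : finType) (e : rel T) (X Y : {set T}) : Prop :=
  forall x y, x \in X -> y \in Y -> e x y.
Definition anticomplete_pair (T : finType) (e : rel T) (X Y : {set T}) : Prop :=
  forall x y, x \in X -> y \in Y -> ~~ e x y.

From Stdlib Require Import Reals Lra Psatz Classical.
From mathcomp Require Import all_boot zify.
Set Implicit Arguments. Unset Strict Implicit. Unset Printing Implicit Defensive.

(* Let G have no induced P_k and no induced
   complement of P_k.
   (a) Gyárfás' path argument: a vertex set W inducing maximum degree D, with
       no anticomplete pair of a-sets and with more than k(D + 3a) vertices,
       contains an induced P_k, found by walking into giant components.
   (b) Splitting lemma: two disjoint h-sets of a P_k-free graph contain sets
       A, B of size >= h / (2 M^k) such that every vertex of A has fewer than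
       |B| / M neighbours in B, or fewer than |B| / M non-neighbours in B.
   (c) Iterating (b) in a Ramsey-type induction, every large S contains r = 40k
       sets of size >= |S| / L, each sparse to all later ones, in G or in the
       complement of G.
   (d) Choosing s = |S| / 2L vertices in each set and keeping the vertices of
       low degree yields a set to which (a) applies with a ~ |S| / N, N = 4L;
       so if S had no pure pair of ratio N, G or its complement would contain
       an induced P_k.  Hence every S with |S| >= 2 has a pure pair of ratio N.  Recursing into a pure pair, every nonempty S has a
   clique K and a stable set I with |K| |I| >= |S|^γ, where N^γ = 2; the larger
   of the two has at least |S|^(γ/2) vertices. *)

Definition degree_in (T : finType) (f : rel T) (x : T) (B : {set T}) : nat :=
  #|[set y in B | f x y]|.

Section Gyarfas.
Variables (T : finType) (e : rel T).
Hypothesis esym : symmetric e.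
Implicit Types S X Y Z C K W : {set T}.

(* [closed_in S X]: no edge of G[S] leaves X; for X ⊆ S this says that X is a
   union of connected components of G[S]. *)
Definition closed_in (S X : {set T}) : bool :=
  [forall x in X, forall y in S, (y \in X) || ~~ e x y].

Lemma closed_inP S X :
  reflect (forall x y, x \in X -> y \in S -> y \notin X -> ~~ e x y) (closed_in S X).
Proof.
apply: (iffP forall_inP) => [H x y xX yS yX|H x xX].
  by move: (H x xX) => /forall_inP /(_ y yS); rewrite (negbTE yX).
by apply/forall_inP => y yS; case: (boolP (y \in X)) => //= yX; exact: H.
Qed.

Lemma closed_in_self S : closed_in S S.
Proof. by apply/closed_inP => x y _ ->. Qed.

Lemma closed_in_compl S X : closed_in S X -> closed_in S (S :\: X).
Proof.
move/closed_inP=> H; apply/closed_inP => x y; rewrite !in_setD => /andP[xX xS] yS.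
by rewrite yS andbT negbK => yX; rewrite esym; exact: H.
Qed.

Lemma closed_in_trans S X Y : Y \subset X -> closed_in S X -> closed_in X Y -> closed_in S Y.
Proof.
move=> /subsetP YX /closed_inP HX /closed_inP HY; apply/closed_inP => x y xY yS yY.
by case: (boolP (y \in X)) => yX; [exact: HY | exact: HX (YX _ xY) yS yX].
Qed.

Definition connected_set (K : {set T}) : Prop :=
  forall Y, Y \subset K -> closed_in K Y -> Y = set0 \/ Y = K.

Definition no_anticomplete_pair (Z : {set T}) (a : nat) : Prop :=
  forall X Y, X \subset Z -> Y \subset Z -> [disjoint X & Y] ->
    a <= #|X| -> a <= #|Y| -> anticomplete_pair e X Y -> False.

Lemma no_anticomplete_pair_sub Z Z' a :
  Z' \subset Z -> no_anticomplete_pair Z a -> no_anticomplete_pair Z' a.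
Proof. by move=> sZ H X Y XZ YZ; apply: H; exact: subset_trans sZ. Qed.

(* Without an anticomplete pair of a-sets, a set C of size >= 3a has a
   connected "giant component" K missing fewer than a vertices of C: take a
   smallest closed subset of size >= a; its complement is anticomplete to it,
   hence small, and any proper closed part of it would be a smaller choice. *)
Lemma giant_component a C : 0 < a -> no_anticomplete_pair C a -> 3 * a <= #|C| ->
  exists K, [/\ K \subset C, closed_in C K, connected_set K & #|C| < #|K| + a].
Proof.
move=> a0 hna hC.
pose P m := [exists X : {set T}, [&& X \subset C, closed_in C X, a <= #|X| & #|X| == m]].
have exP : exists m, P m.
  by exists #|C|; apply/existsP; exists C; rewrite subxx closed_in_self eqxx /=; lia.
case: (ex_minnP exP) => m /existsP [K /and4P [KC cK aK /eqP Km]] minm.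
have small_rest : #|C :\: K| < a.
  rewrite ltnNge; apply/negP => h; apply: (hna K (C :\: K)) => //; first exact: subsetDl.
    by rewrite disjoints_subset; apply/subsetP => x xK; rewrite !inE xK.
  by move=> x y xK /setDP[yC yK]; move/closed_inP: cK; apply.
have big_K : #|C| < #|K| + a by move: small_rest; rewrite cardsDS //; lia.
exists K; split => //.
move=> Y YK cY; case: (eqVneq Y set0) => [->|Yn0]; [by left | right].
apply/eqP; rewrite eqEcard YK /= leqNgt; apply/negP => hlt.
have Y0 : 0 < #|Y| by rewrite card_gt0.
have cCY : closed_in C Y by exact: closed_in_trans YK cK cY.
have cCKY : closed_in C (K :\: Y).
  exact: closed_in_trans (subsetDl K Y) cK (closed_in_compl cY).
have hKY : #|K :\: Y| = #|K| - #|Y| by rewrite cardsDS.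
have [aY|Ya] := leqP a #|Y|.
  have : P #|Y| by apply/existsP; exists Y; rewrite cCY aY eqxx (subset_trans YK KC).
  by move/minm; lia.
have : P #|K :\: Y|.
  apply/existsP; exists (K :\: Y); rewrite cCKY eqxx (subset_trans (subsetDl K Y) KC) /=.
  by rewrite hKY; lia.
by move/minm; rewrite hKY; lia.
Qed.

Definition induced_path (x0 : T) (p : seq T) : Prop :=
  uniq p /\ forall i j, i < j -> j < size p -> e (nth x0 p i) (nth x0 p j) = (j == i.+1).

Lemma induced_path_rcons x0 p u : induced_path x0 p -> u \notin p ->
  (forall i, i < size p -> e (nth x0 p i) u = (i.+1 == size p)) ->
  induced_path x0 (rcons p u).
Proof.
move=> [up hp] up' hu; split; first by rewrite rcons_uniq up' up.
move=> i j ij; rewrite size_rcons ltnS !nth_rcons => jp.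
have ip : i < size p by apply: leq_trans ij jp.
rewrite ip; case: (ltnP j (size p)) => jp'; first exact: hp.
have -> : j = size p by apply/eqP; rewrite eqn_leq jp jp'.
by rewrite eqxx hu // eq_sym.
Qed.

Lemma induced_path_contains x0 k p :
  induced_path x0 p -> size p = k -> contains_induced e (path_rel k).
Proof.
move=> [up hp] sp; exists (fun i : 'I_k => nth x0 p i); split.
  by move=> i j /eqP; rewrite nth_uniq ?sp // => /eqP; exact: val_inj.
move=> i j ij; rewrite /path_rel.
have [lt|gt|eq] := ltngtP i j; last by move: ij; rewrite (val_inj eq) eqxx.
- rewrite hp ?sp // eq_sym; have -> : (j.+1 == i :> nat) = false by lia.
  by rewrite orbF.
- rewrite esym hp ?sp //; have -> : (i.+1 == j :> nat) = false by lia.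
  done.
Qed.

Definition attached (v : T) (C : {set T}) : Prop :=
  forall Z, Z \subset C -> closed_in C Z -> Z != set0 -> exists2 z, z \in Z & e v z.

Lemma attached_connected v K z : connected_set K -> z \in K -> e v z -> attached v K.
Proof.
move=> conK zK vz Z ZK cZ Zn0.
by case: (conK Z ZK cZ) => ZE; [move: Zn0; rewrite ZE eqxx | rewrite ZE; exists z].
Qed.

Lemma attached_rest v X : connected_set X -> v \in X -> attached v (X :\ v).
Proof.
move=> conX vX Z ZC cZ Zn0.
have ZX : Z \subset X by apply: subset_trans ZC _; apply: subsetDl.
apply/exists_inP; apply/negP => /exists_inP H.
have cXZ : closed_in X Z.
  apply/closed_inP => x y xZ yX yZ; case: (eqVneq y v) => [->|yv].
    by rewrite esym; apply/negP => vx; apply: H; exists x.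
  by move/closed_inP: cZ; apply => //; rewrite !inE yv.
case: (conX Z ZX cXZ) => ZE; first by move: Zn0; rewrite ZE eqxx.
by move: (subsetP ZC v); rewrite ZE vX !inE eqxx => /(_ isT).
Qed.

Section Walk.
Variables (W : {set T}) (D a : nat) (x0 : T).
Hypothesis a_gt0 : 0 < a.
Hypothesis W_no_pair : no_anticomplete_pair W a.
Hypothesis W_deg : forall x, x \in W -> degree_in e x W <= D.

Lemma walk_next v C : v \in W -> C \subset W -> attached v C -> D + 3 * a <= #|C| ->
  exists u K, [/\ u \in C, e v u & attached u K] /\
    [/\ K \subset C, (forall y, y \in K -> ~~ e v y) & #|C| <= #|K| + D + a].
Proof.
move=> vW CW att hC.
set C' := [set y in C | ~~ e v y].
have C'C : C' \subset C by apply/subsetP => y; rewrite inE => /andP[].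
have hC' : #|C| <= #|C'| + D.
  have NvW : [set y in C | e v y] \subset [set y in W | e v y].
    by apply/subsetP => y; rewrite !inE => /andP[/(subsetP CW) -> ->].
  have := cardsID [set y in C | e v y] C; have := W_deg vW; rewrite /degree_in.
  have -> : C :&: [set y in C | e v y] = [set y in C | e v y].
    by apply/setIidPr/subsetP => y; rewrite inE => /andP[].
  have -> : C :\: [set y in C | e v y] = C'.
    by apply/setP => y; rewrite !inE; case: (y \in C); rewrite ?andbF ?andbT.
  by have := subset_leq_card NvW; lia.
have [K [KC' cK conK hK]] : exists K, [/\ K \subset C', closed_in C' K,
    connected_set K & #|C'| < #|K| + a].
  apply: giant_component => //; last lia.
  exact: no_anticomplete_pair_sub (subset_trans C'C CW) W_no_pair.
have KC := subset_trans KC' C'C.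
have Kv y : y \in K -> ~~ e v y by move/(subsetP KC'); rewrite inE => /andP[].
(* Some neighbour of v in C sees K, or else K would be closed in C. *)
have [u uC /andP[vu /exists_inP[z zK uz]]] :
    exists2 u, u \in C & e v u && [exists z in K, e u z].
  apply/exists_inP; apply/negP => /exists_inP H.
  have cCK : closed_in C K.
    apply/closed_inP => x y xK yC yK; case: (boolP (e v y)) => vy.
      rewrite esym; apply/negP => yx; apply: H; exists y => //.
      by rewrite vy; apply/exists_inP; exists x.
    by move/closed_inP: cK; apply => //; rewrite inE yC vy.
  have Kn0 : K != set0 by rewrite -card_gt0; lia.
  have [z zK vz] := att K KC cCK Kn0.
  by move: (Kv z zK); rewrite vz.
exists u, K; split; split => //; [exact: attached_connected uz | lia].
Qed.

Definition walk_inv (p : seq T) (C : {set T}) : Prop :=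
  [/\ 0 < size p, {subset p <= W}, C \subset W, (forall y, y \in C -> y \notin p)
    & (forall y i, y \in C -> i.+1 < size p -> ~~ e (nth x0 p i) y) /\
      attached (last x0 p) C].

Lemma walk_step p C : induced_path x0 p -> walk_inv p C -> D + 3 * a <= #|C| ->
  exists u K, [/\ induced_path x0 (rcons p u), walk_inv (rcons p u) K &
    #|C| <= #|K| + D + a].
Proof.
move=> ip [p0 pW CW Cp [Cn att]] hC.
set v := last x0 p.
have vW : v \in W by apply: pW; rewrite /v -nth_last mem_nth // ltn_predL.
have [u [K [[uC vu attK] [KC Kv hK]]]] := walk_next vW CW att hC.
have vE i : i.+1 = size p -> nth x0 p i = v by move=> h; rewrite /v -nth_last -h.
have hu i : i < size p -> e (nth x0 p i) u = (i.+1 == size p).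
  move=> ilt; case: (ltngtP i.+1 (size p)) => h; [by rewrite (negbTE (Cn u i uC h)) | lia |].
  by rewrite vE // vu h eqxx.
exists u, K; split => //.
  exact: induced_path_rcons (Cp u uC) hu.
split; [by rewrite size_rcons | | exact: subset_trans KC CW | | split].
- by move=> y; rewrite mem_rcons inE => /orP[/eqP->|]; [apply: (subsetP CW) | apply: pW].
- move=> y yK; rewrite mem_rcons inE negb_or (Cp y (subsetP KC _ yK)) andbT.
  by apply/eqP => yu; move: (Kv y yK); rewrite yu vu.
- move=> y i yK; rewrite size_rcons ltnS nth_rcons => ilt; rewrite ilt.
  case: (ltngtP i.+1 (size p)) => h; [exact: Cn (subsetP KC _ yK) h | lia |].
  by rewrite vE //; exact: Kv.
- by rewrite last_rcons.
Qed.

Lemma walk_loop k : forall j p C, induced_path x0 p -> walk_inv p C ->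
  size p + j = k -> j * (D + 3 * a) <= #|C| -> contains_induced e (path_rel k).
Proof.
elim=> [|j IH] p C ip iv hs hC; first by apply: (induced_path_contains ip); lia.
have [u [K [ip' iv' hK]]] := walk_step ip iv ltac:(lia).
by apply: (IH _ K ip' iv'); rewrite ?size_rcons; lia.
Qed.

End Walk.

Lemma gyarfas_path W D a k : 0 < a -> no_anticomplete_pair W a ->
  (forall x, x \in W -> degree_in e x W <= D) ->
  0 < k -> k * (D + 3 * a) < #|W| -> contains_induced e (path_rel k).
Proof.
move=> a0 hna hdeg k0 hW.
have hWa : D + 3 * a < #|W| by apply: leq_trans hW; rewrite ltnS leq_pmull.
have [X [XW _ conX hX]] := giant_component a0 hna ltac:(lia).
have [v vX] : exists v, v \in X by apply/card_gt0P; lia.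
have ip : induced_path v [:: v] by split => // i j ij; rewrite /= ltnS leqn0 => /eqP j0; lia.
have iv : walk_inv W v [:: v] (X :\ v).
  split => //; first by move=> y; rewrite inE => /eqP->; apply: (subsetP XW).
  - by apply: subset_trans XW; apply: subsetDl.
  - by move=> y; rewrite !inE => /andP[].
  by split; [move=> y [|i] | exact: attached_rest].
apply: (walk_loop a0 hna hdeg (j := k.-1) ip iv); first by rewrite /= add1n prednK.
have hXv : #|X| = (#|X :\ v|).+1 by rewrite (cardsD1 v X) vX.
by move: hW; case: k k0 => // k _; rewrite mulSn /=; lia.
Qed.

End Gyarfas.

Definition compl_rel (T : finType) (e : rel T) : rel T := fun x y => (x != y) && ~~ e x y.

Lemma compl_rel_sym (T : finType) (e : rel T) : symmetric e -> symmetric (compl_rel e).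
Proof. by move=> s x y; rewrite /compl_rel eq_sym s. Qed.

Lemma compl_rel_path (T : finType) (e : rel T) k :
  contains_induced (compl_rel e) (path_rel k) -> contains_induced e (copath_rel k).
Proof.
move=> [g [gi hg]]; exists g; split => // i j ij.
have gij : g i != g j by apply/negP => /eqP /gi /eqP; rewrite (negbTE ij).
by rewrite /copath_rel ij -(hg i j ij) /compl_rel gij negbK.
Qed.

Section Splitting.
Variables (T : finType) (e : rel T).
Hypothesis esym : symmetric e.
Implicit Types W R A B : {set T}.
Variables (k M h : nat) (W0 R0 : {set T}) (x0 : T).
Hypothesis no_path : ~ contains_induced e (path_rel k).
Hypothesis M_gt0 : 0 < M.

Definition split_inv (p : seq T) W R : Prop :=
  [/\ induced_path e x0 p, (W :|: R) \subset (W0 :|: R0), [disjoint W & R],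
   (forall y, y \in W :|: R -> y \notin p) &
   [/\ (forall y i, y \in W -> i < size p -> e (nth x0 p i) y = (i.+1 == size p)),
       (forall y i, y \in R -> i < size p -> e (nth x0 p i) y = false),
       h <= M ^ size p * #|W| & h <= M ^ size p * #|R|]].

Definition sparse_split : Prop :=
  exists A B, [/\ [disjoint A & B], (A :|: B) \subset (W0 :|: R0),
   h <= 2 * M ^ k * #|A|, h <= M ^ k * #|B| &
   ((forall a, a \in A -> M * degree_in e a B < #|B|) \/
    (forall a, a \in A -> M * degree_in (compl_rel e) a B < #|B|))].

Lemma split_extend p W R u : split_inv p W R -> u \in W ->
  #|R| <= M * degree_in e u R -> #|R| <= M * degree_in (compl_rel e) u R ->
  split_inv (rcons p u) [set y in R | e u y] [set y in R | compl_rel e u y].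
Proof.
move=> [ip sub dis nin [hW hR szW szR]] uW g1 g2.
set W' := [set y in R | e u y]; set R' := [set y in R | compl_rel e u y].
have W'R : W' \subset R by apply/subsetP => y; rewrite inE => /andP[].
have R'R : R' \subset R by apply/subsetP => y; rewrite inE => /andP[].
have uR : u \notin R by rewrite (disjointFr dis uW).
split.
- apply: induced_path_rcons => //; first by apply: nin; rewrite inE uW.
  by move=> i ilt; apply: hW.
- by apply: subset_trans sub; rewrite subUset !(subset_trans _ (subsetUr W R)).
- rewrite disjoints_subset; apply/subsetP => y; rewrite !inE => /andP[_ uy].
  by rewrite /compl_rel uy !andbF.
- move=> y; rewrite inE => /orP[/(subsetP W'R)|/(subsetP R'R)] yR;
  rewrite mem_rcons inE negb_or nin ?inE ?yR ?orbT // andbT;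
  by apply/eqP => yu; move: uR; rewrite -yu yR.
split.
- move=> y i; rewrite inE => /andP[yR uy]; rewrite size_rcons ltnS nth_rcons leq_eqVlt.
  case/orP => [/eqP ->|ilt]; first by rewrite ltnn !eqxx uy.
  by rewrite ilt hR //; symmetry; apply/eqP; lia.
- move=> y i; rewrite inE => /andP[yR /andP[_ uy]].
  rewrite size_rcons ltnS nth_rcons leq_eqVlt.
  case/orP => [/eqP ->|ilt]; first by rewrite ltnn !eqxx (negbTE uy).
  by rewrite ilt hR.
- rewrite size_rcons expnS (mulnC M) -mulnA; apply: leq_trans szR _.
  by rewrite leq_mul2l; apply/orP; right; exact: g1.
- rewrite size_rcons expnS (mulnC M) -mulnA; apply: leq_trans szR _.
  by rewrite leq_mul2l; apply/orP; right; exact: g2.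
Qed.

(* If no vertex of W can extend the path, W splits into the vertices sparse to
   R and those co-sparse to R; the larger part together with R is the output. *)
Lemma split_stop p W R : split_inv p W R -> size p <= k ->
  (forall u, u \in W -> M * degree_in e u R < #|R| \/
                        M * degree_in (compl_rel e) u R < #|R|) -> sparse_split.
Proof.
move=> [_ sub dis _ [_ _ szW szR]] pk H.
have Mpk : M ^ size p <= M ^ k by rewrite leq_pexp2l.
set Bs := [set u in W | M * degree_in e u R < #|R|].
set Bd := [set u in W | M * degree_in (compl_rel e) u R < #|R|].
have cWB : #|W| <= #|Bs| + #|Bd|.
  apply: leq_trans (leq_card_setU _ _); apply: subset_leq_card.
  by apply/subsetP => u uW; rewrite !inE uW /=; apply/orP; exact: H.
have BW A : A \subset W -> [disjoint A & R] /\ A :|: R \subset W0 :|: R0.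
  move=> AW; split; first exact: disjointWl AW dis.
  by apply: subset_trans sub; rewrite setSU.
have BsW : Bs \subset W by apply/subsetP => y; rewrite inE => /andP[].
have BdW : Bd \subset W by apply/subsetP => y; rewrite inE => /andP[].
have szR' : h <= M ^ k * #|R| by apply: leq_trans szR _; rewrite leq_mul2r Mpk orbT.
have szA A : #|W| <= 2 * #|A| -> h <= 2 * M ^ k * #|A|.
  by move=> hA; apply: leq_trans szW _; rewrite (mulnC 2) -mulnA; exact: leq_mul Mpk hA.
case: (leqP #|Bd| #|Bs|) => hB.
- have [dB sB] := BW _ BsW; exists Bs, R; split => //; first by apply: szA; lia.
  by left => a; rewrite inE => /andP[].
- have [dB sB] := BW _ BdW; exists Bd, R; split => //; first by apply: szA; lia.
  by right => a; rewrite inE => /andP[].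
Qed.

(* Either the path reaches k vertices, which is impossible, or the procedure
   stops with the desired output. *)
Lemma split_loop : forall j p W R, split_inv p W R -> size p + j = k -> sparse_split.
Proof.
elim=> [|j IH] p W R inv hs.
  by case: inv => [ip _ _ _ _]; case: no_path; apply: (induced_path_contains esym ip); lia.
case: (boolP [exists u in W, (#|R| <= M * degree_in e u R) &&
                              (#|R| <= M * degree_in (compl_rel e) u R)]).
  case/exists_inP => u uW /andP[g1 g2].
  by apply: IH (split_extend inv uW g1 g2) _; rewrite size_rcons; lia.
move/exists_inP => H; apply: (split_stop inv); first lia.
move=> u uW; case: (ltnP (M * degree_in e u R) #|R|) => [|g1]; [by left | right].
by rewrite ltnNge; apply/negP => g2; apply: H; exists u => //; rewrite g1 g2.
Qed.

Lemma split_main : [disjoint W0 & R0] -> h <= #|W0| -> h <= #|R0| -> sparse_split.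
Proof.
move=> dis hW hR; apply: (@split_loop k [::] W0 R0) => //.
by split; rewrite ?expn0 ?mul1n //; split.
Qed.

End Splitting.

Section Counting.
Variable T : finType.
Implicit Types X Y A B : {set T}.

Lemma degree_in_sum (f : rel T) x Y : degree_in f x Y = \sum_(y in Y) f x y.
Proof.
rewrite /degree_in -sum1_card big_mkcond [RHS]big_mkcond /=; apply: eq_bigr => y _.
by rewrite inE; case: (y \in Y); case: (f x y).
Qed.

Lemma card_setU_disjoint A B : [disjoint A & B] -> #|A :|: B| = #|A| + #|B|.
Proof. by move=> d; rewrite cardsU (disjoint_setI0 d) cards0 subn0. Qed.

Lemma sum_setU_disjoint (F : T -> nat) X Y : [disjoint X & Y] ->
  \sum_(i in X :|: Y) F i = \sum_(i in X) F i + \sum_(i in Y) F i.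
Proof. by move=> dis; rewrite -bigU //=; apply: eq_bigl => i; rewrite !inE. Qed.

Lemma degree_in_setU (f : rel T) x X Y : [disjoint X & Y] ->
  degree_in f x (X :|: Y) = degree_in f x X + degree_in f x Y.
Proof. by move=> dis; rewrite !degree_in_sum sum_setU_disjoint. Qed.

Lemma double_count (f : rel T) : symmetric f -> forall X Y,
  \sum_(x in X) degree_in f x Y = \sum_(y in Y) degree_in f y X.
Proof.
move=> fs X Y; under eq_bigr do rewrite degree_in_sum.
under [RHS]eq_bigr do rewrite degree_in_sum.
by rewrite exchange_big /=; apply: eq_bigr => y _; apply: eq_bigr => x _; rewrite fs.
Qed.

Lemma markov (F : T -> nat) B t :
  #|B :\: [set y in B | F y <= t]| * t.+1 <= \sum_(y in B) F y.
Proof.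
set H := B :\: _; rewrite (big_setID H) /= (setIidPr (subsetDl _ _)).
rewrite -sum_nat_const; apply: leq_trans (leq_addr _ _); apply: leq_sum => y.
by rewrite !inE => /andP[/negP H1 yB]; rewrite ltnNge; apply/negP; rewrite yB in H1.
Qed.

Lemma subset_card A m : m <= #|A| -> exists B, B \subset A /\ #|B| = m.
Proof.
elim: m => [|m IH] hm; first by exists set0; rewrite sub0set cards0.
have [B [BA hB]] := IH (ltnW hm).
have [x /setDP[xA xB]] : exists x, x \in A :\: B by apply/card_gt0P; rewrite cardsDS //; lia.
exists (x |: B); rewrite cardsU1 xB hB; split => //.
by rewrite subUset sub1set xA.
Qed.

End Counting.

Section SparseFamily.
Variables (T : finType) (f : rel T) (M : nat).
Hypothesis fsym : symmetric f.

Definition family_union (fam : seq {set T}) : {set T} := \bigcup_(P <- fam) P.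

Fixpoint sparse_family (fam : seq {set T}) : Prop :=
  match fam with
  | [::] => True
  | B :: rest => [/\ [disjoint B & family_union rest],
      (forall x, x \in family_union rest -> M * degree_in f x B < #|B|) &
      sparse_family rest]
  end.

Lemma family_union_cons B rest : family_union (B :: rest) = B :|: family_union rest.
Proof. by rewrite /family_union big_cons. Qed.

Lemma family_union_sub (fam : seq {set T}) (A : {set T}) :
  (forall P, P \in fam -> P \subset A) -> family_union fam \subset A.
Proof. by move=> H; rewrite /family_union bigcup_seq; apply/bigcupsP. Qed.

(* If every vertex of U has few f-neighbours in B and |B| >= 2s, then s vertices
   of B have at most 2|U|/M f-neighbours in U each (by double counting and
   Markov's inequality). *)
Lemma low_degree_choice (U B : {set T}) s :
  (forall x, x \in U -> M * degree_in f x B < #|B|) -> 2 * s <= #|B| ->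
  exists Q : {set T}, [/\ Q \subset B, #|Q| = s & forall y, y \in Q -> M * degree_in f y U <= 2 * #|U|].
Proof.
move=> sparse hB.
have edges : M * \sum_(y in B) degree_in f y U <= #|U| * #|B|.
  rewrite -double_count // big_distrr /= -sum_nat_const; apply: leq_sum => x xU.
  exact: ltnW (sparse x xU).
set L := [set y in B | M * degree_in f y U <= 2 * #|U|].
have LB : L \subset B by apply/subsetP => y; rewrite inE => /andP[].
have few_high : #|B :\: L| * (2 * #|U|).+1 <= #|U| * #|B|.
  by apply: leq_trans (markov _ _ _) _; rewrite -big_distrr.
have cL : #|B| = #|L| + #|B :\: L| by rewrite cardsDS //; have := subset_leq_card LB; lia.
have [Q [QL hQ]] : exists Q : {set T}, Q \subset L /\ #|Q| = s by apply: subset_card; nia.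
exists Q; split => //; first exact: subset_trans QL LB.
by move=> y /(subsetP QL); rewrite inE => /andP[].
Qed.

Lemma sparse_family_trim s : forall fam, sparse_family fam ->
  (forall P, P \in fam -> 2 * s <= #|P|) ->
  exists W : {set T}, [/\ W \subset family_union fam, #|W| = s * size fam &
     M * \sum_(x in W) degree_in f x W <= M * size fam * s ^ 2 + 4 * s ^ 2 * size fam ^ 2].
Proof.
elim=> [|B rest IH] /=.
  by move=> _ _; exists set0; rewrite cards0 big_set0 sub0set; split => //; lia.
move=> [dis sparse fam_rest] hsz.
have [U [Usub hU hsum]] := IH fam_rest (fun P HP => hsz P (@mem_behead _ (B :: rest) _ HP)).
have [Q [QB hQ Qlow]] := low_degree_choice (fun x xU => sparse x (subsetP Usub x xU))
  (hsz B (mem_head B rest)).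
have disQU : [disjoint Q & U] by apply: disjointWl QB (disjointWr Usub dis).
exists (Q :|: U); split.
- by rewrite family_union_cons setUSS.
- by rewrite card_setU_disjoint // hQ hU; lia.
have inQ : \sum_(x in Q) degree_in f x Q <= s * s.
  rewrite -hQ -sum_nat_const; apply: leq_sum => x _; apply: subset_leq_card.
  by apply/subsetP => y; rewrite inE => /andP[].
have QtoU : M * \sum_(x in Q) degree_in f x U <= s * (2 * #|U|).
  by rewrite big_distrr /= -hQ -sum_nat_const; apply: leq_sum.
rewrite sum_setU_disjoint //.
under eq_bigr do rewrite degree_in_setU //.
under [X in _ + X]eq_bigr do rewrite degree_in_setU //.
rewrite !big_split /= (double_count fsym U Q) !mulnDr.
rewrite hU in QtoU hsum; nia.
Qed.

End SparseFamily.

Definition rel_or_compl (T : finType) (e : rel T) (c : bool) : rel T :=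
  if c then compl_rel e else e.

(* Loss factor of one application of the splitting lemma. *)
Definition split_ratio (k M : nat) : nat := 8 * M ^ k.

Section Families.
Variables (T : finType) (e : rel T).
Hypothesis esym : symmetric e.
Variables (k M : nat).
Hypothesis no_path : ~ contains_induced e (path_rel k).
Hypothesis M_gt0 : 0 < M.
Local Notation Q := (split_ratio k M).

Lemma split_ratio_gt0 : 0 < Q.
Proof. by rewrite /split_ratio muln_gt0 expn_gt0 M_gt0. Qed.

Definition has_family (c : bool) (m : nat) (S : {set T}) (n : nat) : Prop :=
  exists fam : seq {set T}, [/\ size fam = m, sparse_family (rel_or_compl e c) M fam &
     forall P, P \in fam -> P \subset S /\ #|S| <= Q ^ n * #|P|].

(* The splitting lemma applied to the two halves of S. *)
Lemma split_set (S : {set T}) : 2 <= #|S| -> exists (A B : {set T}) (c : bool),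
  [/\ [disjoint A & B], A \subset S, B \subset S, #|S| <= Q * #|A|
    & #|S| <= Q * #|B| /\
      forall a, a \in A -> M * degree_in (rel_or_compl e c) a B < #|B|].
Proof.
move=> hS; have [x0 _] : exists x, x \in S by apply/card_gt0P; lia.
set h := #|S| %/ 2.
have [W0 [W0S hW0]] := subset_card (leq_div #|S| 2).
have dis : [disjoint W0 & S :\: W0] by rewrite disjoints_subset; apply/subsetP => x xW; rewrite !inE xW.
have hS2 : #|S| <= 2 * h + 1 by rewrite {1}(divn_eq #|S| 2); have := ltn_pmod #|S| (isT : 0 < 2); lia.
have hR0 : h <= #|S :\: W0| by rewrite cardsDS // hW0; lia.
have [A [B [dAB sub hA hB sparse]]] :=
  split_main esym x0 no_path M_gt0 dis (eq_leq (Logic.eq_sym hW0)) hR0.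
have ABS : A :|: B \subset S by apply: subset_trans sub _; rewrite subUset W0S subsetDl.
rewrite subUset in ABS; case/andP: ABS => AS BS.
have sizes (X : {set T}) : h <= 2 * M ^ k * #|X| -> #|S| <= Q * #|X| by rewrite /split_ratio; nia.
have hA' := sizes A hA.
have hB' : #|S| <= Q * #|B| by apply: sizes; apply: leq_trans hB _; rewrite leq_mul2r leq_pmull ?orbT.
by case: sparse => sparse; [exists A, B, false | exists A, B, true].
Qed.

Lemma large_in_large (P A S : {set T}) n : A \subset S -> #|S| <= Q * #|A| ->
  P \subset A /\ #|A| <= Q ^ n * #|P| -> P \subset S /\ #|S| <= Q ^ n.+1 * #|P|.
Proof.
move=> AS hA [PA hPA]; split; first exact: subset_trans PA AS.
by apply: leq_trans hA _; rewrite expnS -mulnA leq_mul2l hPA orbT.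
Qed.

Lemma family_lift c m (A S : {set T}) n : A \subset S -> #|S| <= Q * #|A| ->
  has_family c m A n -> has_family c m S n.+1.
Proof.
move=> AS hA [fam [sz sp hP]]; exists fam; split => // P /hP; exact: large_in_large.
Qed.

Lemma family_cons c m (A B S : {set T}) n :
  A \subset S -> #|S| <= Q * #|A| -> B \subset S -> #|S| <= Q ^ n.+1 * #|B| ->
  [disjoint A & B] -> (forall a, a \in A -> M * degree_in (rel_or_compl e c) a B < #|B|) ->
  has_family c m A n -> has_family c m.+1 S n.+1.
Proof.
move=> AS hA BS hB dAB sparse [fam [sz sp hP]].
have famA_sub : family_union fam \subset A.
  by apply: family_union_sub => P /hP [].
exists (B :: fam); split => /=; [by rewrite sz | split | ].
- by rewrite disjoint_sym; apply: disjointWl famA_sub dAB.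
- by move=> x /(subsetP famA_sub); apply: sparse.
- done.
move=> P; rewrite inE => /orP[/eqP -> | /hP]; [by split | exact: large_in_large].
Qed.

Lemma family_dichotomy : forall n a b, a + b = n -> forall S : {set T}, 2 * Q ^ n <= #|S| ->
  has_family false a S n \/ has_family true b S n.
Proof.
have Q0 := split_ratio_gt0.
elim=> [|n IH] a b hab S hS.
  have -> : a = 0 by lia.
  by left; exists [::].
case: a hab => [|a] hab; first by left; exists [::].
case: b hab => [|b] hab; first by right; exists [::].
have hS2 : 2 <= #|S| by apply: leq_trans hS; rewrite leq_pmulr // expn_gt0 Q0.
have [A [B [c [dAB AS BS hA [hB sparse]]]]] := split_set hS2.
have hA2 : 2 * Q ^ n <= #|A|.
  by rewrite -(leq_pmul2l Q0); apply: leq_trans hA; apply: leq_trans hS; rewrite expnS mulnCA.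
have hBn : #|S| <= Q ^ n.+1 * #|B|.
  by apply: leq_trans hB _; rewrite leq_mul2r expnS leq_pmulr ?orbT // expn_gt0 Q0.
have cons := family_cons AS hA BS hBn dAB sparse.
case: c sparse cons => sparse cons.
- have [famA|famA] := IH a.+1 b ltac:(lia) A hA2.
    by left; exact: family_lift famA.
  by right; exact: cons.
- have [famA|famA] := IH a b.+1 ltac:(lia) A hA2.
    by left; exact: cons.
  by right; exact: family_lift famA.
Qed.

End Families.

Lemma rel_or_compl_sym (T : finType) (e : rel T) c : symmetric e -> symmetric (rel_or_compl e c).
Proof. by case: c => //= /compl_rel_sym. Qed.

Lemma sparse_family_core (T : finType) (f : rel T) s (fam : seq {set T}) :
  symmetric f -> 0 < size fam -> sparse_family f (size fam) fam ->
  (forall P, P \in fam -> 2 * s <= #|P|) ->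
  exists W : {set T}, [/\ W \subset family_union fam, size fam * s <= 2 * #|W| &
    forall x, x \in W -> degree_in f x W <= 10 * s].
Proof.
move=> fsym r0 sp hs; set r := size fam in r0 sp *.
have [W [Wsub hW hsum]] := sparse_family_trim fsym sp hs; rewrite -/r in hW hsum.
have few_edges : \sum_(x in W) degree_in f x W <= 5 * r * s ^ 2.
  by rewrite -(leq_pmul2l r0); nia.
set W' := [set x in W | degree_in f x W <= 10 * s].
have W'W : W' \subset W by apply/subsetP => x; rewrite inE => /andP[].
have few_high : #|W :\: W'| * (10 * s).+1 <= 5 * r * s ^ 2.
  exact: leq_trans (markov _ _ _) few_edges.
have cW : #|W| = #|W'| + #|W :\: W'| by rewrite cardsDS //; have := subset_leq_card W'W; lia.
exists W'; split; first exact: subset_trans W'W Wsub.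
  case: (posnP s) => [-> | s0]; first by rewrite muln0.
  have : 2 * #|W :\: W'| * (5 * s) <= r * s * (5 * s) by nia.
  by rewrite leq_pmul2r; lia.
move=> x; rewrite inE => /andP[xW hx]; apply: leq_trans hx.
by apply: subset_leq_card; apply/subsetP => y; rewrite !inE => /andP[/andP[-> _] ->].
Qed.

Definition pure_pair (T : finType) (e : rel T) (N : nat) (S X Y : {set T}) : Prop :=
  [/\ X \subset S, Y \subset S, [disjoint X & Y], #|S| <= N * #|X|
    & #|S| <= N * #|Y| /\ (complete_pair e X Y \/ anticomplete_pair e X Y)].

(* The constants: r = 40k sets per family, each of size >= |S| / L, and the
   final ratio N = 4L of the pure pair. *)
Definition family_size (k : nat) : nat := 40 * k.
Definition family_loss (k : nat) : nat := split_ratio k (family_size k) ^ (2 * family_size k).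
Definition pure_ratio (k : nat) : nat := 4 * family_loss k.

Lemma family_loss_gt0 k : 0 < k -> 0 < family_loss k.
Proof. by move=> k0; rewrite expn_gt0 split_ratio_gt0 // /family_size; lia. Qed.

Section PurePair.
Variables (T : finType) (e : rel T).
Hypothesis esym : symmetric e.
Variable k : nat.
Hypothesis k_gt0 : 0 < k.
Hypothesis no_path : ~ contains_induced e (path_rel k).
Hypothesis no_copath : ~ contains_induced e (copath_rel k).
Local Notation N := (pure_ratio k).

(* Two distinct vertices always form a pure pair; this handles small S. *)
Lemma pure_pair_small (S : {set T}) : 2 <= #|S| -> #|S| <= N -> exists X Y, pure_pair e N S X Y.
Proof.
move=> h2 hN; have [x xS] : exists x, x \in S by apply/card_gt0P; lia.
have [y /setD1P[yx yS]] : exists y, y \in S :\ x.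
  by apply/card_gt0P; move: h2; rewrite (cardsD1 x S) xS; lia.
exists [set x], [set y]; split; rewrite ?cards1 ?muln1 ?sub1set //.
  by rewrite disjoints1 inE eq_sym.
split => //; case exy: (e x y); [left|right] => a b; rewrite !inE => /eqP-> /eqP->; by rewrite exy.
Qed.

Lemma no_pure_pair_no_anticomplete (S W : {set T}) a c : W \subset S ->
  #|S| < N * a -> ~ (exists X Y, pure_pair e N S X Y) ->
  no_anticomplete_pair (rel_or_compl e c) W a.
Proof.
move=> WS hNa H X Y XW YW dXY aX aY anti; apply: H; exists X, Y.
have large Z : a <= #|Z| -> #|S| <= N * #|Z|.
  by move=> aZ; apply: ltnW; apply: leq_trans hNa _; rewrite leq_mul2l aZ orbT.
split; [exact: subset_trans XW WS | exact: subset_trans YW WS | done | exact: large |].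
split; first exact: large.
case: c anti => /= anti; [left | by right] => x y xX yY.
have xy : x != y by apply/eqP => exy; rewrite exy in xX; rewrite (disjointFr dXY xX) in yY.
by move: (anti x y xX yY); rewrite /compl_rel xy negbK.
Qed.

(* The core argument: a large S without pure pair cannot carry a sparse or
   co-sparse family of r = 40k large sets, since trimming it would give a
   bounded-degree set without anticomplete pairs, containing an induced P_k in
   the graph or in its complement by Gyárfás' argument. *)
Lemma no_large_family (S : {set T}) c fam : N < #|S| ->
  ~ (exists X Y, pure_pair e N S X Y) ->
  size fam = family_size k -> sparse_family (rel_or_compl e c) (family_size k) fam ->
  (forall P, P \in fam -> P \subset S /\ #|S| <= family_loss k * #|P|) -> False.
Proof.
move=> hN H sz sp hp.
set r := family_size k; set L := family_loss k; set n := #|S|; set f := rel_or_compl e c.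
have r0 : 0 < r by rewrite /r /family_size; lia.
have L0 : 0 < L := family_loss_gt0 k_gt0.
set s := n %/ (2 * L); set a := n %/ N + 1.
have hsL : s * (2 * L) <= n by apply: leq_divM.
have hs P : P \in fam -> 2 * s <= #|P|.
  by move=> /hp [_ hP]; rewrite -(leq_pmul2l L0); apply: (leq_trans _ hP); nia.
have sp' : sparse_family f (size fam) fam by rewrite sz.
have fam0 : 0 < size fam by rewrite sz.
have [W [Wsub hW Wdeg]] := sparse_family_core (rel_or_compl_sym c esym) fam0 sp' hs.
rewrite sz -/r in hW.
have NL : N = 4 * L by [].
have hNa : n < N * a by rewrite /a addn1 mulnC ltn_ceil // NL; lia.
have ha : a <= s.
  have q1 : 1 <= n %/ N by rewrite leq_divRL ?NL ?mul1n 1?ltnW //; lia.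
  have q2 : n %/ N * N <= n by apply: leq_divM.
  by rewrite /s leq_divRL /a; rewrite NL in q1 q2 *; nia.
have WS : W \subset S by apply: subset_trans Wsub _; apply: family_union_sub => P /hp [].
have hna := no_pure_pair_no_anticomplete (c := c) WS hNa H.
have a0 : 0 < a by rewrite /a addn1.
have long : k * (10 * s + 3 * a) < #|W|.
  by have hW' : 40 * k * s <= 2 * #|W| by []; nia.
have := gyarfas_path (rel_or_compl_sym c esym) a0 hna Wdeg k_gt0 long.
by case: (c) => /= P; [apply: no_copath; exact: compl_rel_path | exact: no_path].
Qed.

Lemma pure_pair_exists (S : {set T}) : 2 <= #|S| -> exists X Y, pure_pair e N S X Y.
Proof.
move=> h2; case: (leqP #|S| N) => hN; first exact: pure_pair_small.
apply: NNPP => H; set r := family_size k.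
have r0 : 0 < r by rewrite /r /family_size; lia.
have hLS : 2 * split_ratio k r ^ (2 * r) <= #|S|.
  by move: hN; rewrite /pure_ratio /family_loss -/r; lia.
have rr : r + r = 2 * r by lia.
have [[fam [sz sp hp]] | [fam [sz sp hp]]] := family_dichotomy esym no_path r0 rr hLS.
- exact: (no_large_family (c := false) hN H sz sp hp).
- exact: (no_large_family (c := true) hN H sz sp hp).
Qed.

End PurePair.

(* Reals is imported again because zify rebinds the %R delimiter to the
   scope of abstract rings. *)
From Stdlib Require Import Reals.

Definition eh_exponent (N : nat) : R := (ln 2 / ln (INR N))%R.

Lemma ln_nat_pos N : (2 <= N)%N -> (0 < ln (INR N))%R.
Proof.
move=> hN; rewrite -ln_1; apply: ln_increasing; first lra.
have : (2 <= INR N)%R by change 2%R with (INR 2); apply: le_INR; apply/leP.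
lra.
Qed.

Lemma eh_exponent_pos N : (2 <= N)%N -> (0 < eh_exponent N)%R.
Proof.
move=> hN; apply: Rdiv_lt_0_compat; last exact: ln_nat_pos.
by rewrite -ln_1; apply: ln_increasing; lra.
Qed.

Lemma Rpower_eh_exponent N : (2 <= N)%N -> Rpower (INR N) (eh_exponent N) = 2%R.
Proof.
move=> hN; have h := ln_nat_pos hN; rewrite /Rpower /eh_exponent.
have -> : (ln 2 / ln (INR N) * ln (INR N) = ln 2)%R by field; lra.
by apply: exp_ln; lra.
Qed.

(* If m <= N x then m^γ <= 2 x^γ: losing a factor N in size halves the bound. *)
Lemma Rpower_ratio N m x : (2 <= N)%N -> (1 <= m)%N -> (m <= N * x)%N ->
  (Rpower (INR m) (eh_exponent N) <= 2 * Rpower (INR x) (eh_exponent N))%R.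
Proof.
move=> hN hm hx; have g0 := Rlt_le _ _ (eh_exponent_pos hN).
have pos n : (1 <= n)%N -> (0 < INR n)%R by move=> n1; apply: lt_0_INR; apply/ltP; lia.
apply: Rle_trans (_ : Rpower (INR N * INR x) (eh_exponent N) <= _)%R.
  apply: Rle_Rpower_l => //; split; first exact: pos.
  by rewrite -mult_INR; apply: le_INR; apply/leP.
have x1 : (1 <= x)%N by move: hx hm; case: x; rewrite ?muln0 //; lia.
by rewrite -Rpower_mult_distr ?Rpower_eh_exponent //; [lra | apply: pos; lia | exact: pos].
Qed.

Lemma sqrt_le_max (P a b : R) : (0 < P)%R -> (0 <= b)%R -> (b <= a)%R -> (P * P <= a * b)%R ->
  (P <= a)%R.
Proof. by move=> *; nra. Qed.

Section ErdosHajnal.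
Variables (T : finType) (e : rel T).
Hypothesis esym : symmetric e.
Hypothesis eirr : irreflexive e.
Variable N : nat.
Hypothesis N_ge2 : (2 <= N)%N.
Hypothesis pure_pairs : forall S : {set T}, (2 <= #|S|)%N -> exists X Y, pure_pair e N S X Y.

Lemma clique_setU (X Y K1 K2 : {set T}) : complete_pair e X Y -> K1 \subset X -> K2 \subset Y ->
  is_clique e K1 -> is_clique e K2 -> is_clique e (K1 :|: K2).
Proof.
move=> cp /subsetP s1 /subsetP s2 c1 c2 x y; rewrite !inE => /orP[x1|x2] /orP[y1|y2] xy.
- exact: c1.
- exact: cp (s1 _ x1) (s2 _ y2).
- by rewrite esym; exact: cp (s1 _ y1) (s2 _ x2).
- exact: c2.
Qed.

Lemma stable_setU (X Y I1 I2 : {set T}) : anticomplete_pair e X Y -> I1 \subset X -> I2 \subset Y ->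
  is_stable e I1 -> is_stable e I2 -> is_stable e (I1 :|: I2).
Proof.
move=> ap /subsetP s1 /subsetP s2 i1 i2 x y; rewrite !inE => /orP[x1|x2] /orP[y1|y2].
- exact: i1.
- exact: ap (s1 _ x1) (s2 _ y2).
- by rewrite esym; exact: ap (s1 _ y1) (s2 _ x2).
- exact: i2.
Qed.

Definition clique_stable_product (S : {set T}) : Prop :=
  exists K I : {set T}, [/\ K \subset S, I \subset S, is_clique e K, is_stable e I &
    (Rpower (INR #|S|) (eh_exponent N) <= INR (#|K| * #|I|))%R].

Lemma clique_stable_product_singleton (S : {set T}) : #|S| = 1%N -> clique_stable_product S.
Proof.
move=> /eqP/cards1P [z ->]; exists [set z], [set z]; split => //.
- by move=> x y; rewrite !inE => /eqP-> /eqP->; rewrite eqxx.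
- by move=> x y; rewrite !inE => /eqP-> /eqP->; rewrite eirr.
- by rewrite cards1 /Rpower ln_1 Rmult_0_r exp_0 /=; lra.
Qed.

(* Inductive step: with a complete pair X, Y, the union of the cliques found in
   X and Y is a clique, and the larger stable set is kept; the anticomplete
   case is symmetric. Since |X|, |Y| >= |S| / N, each product is at least
   |S|^γ / 2, so their sum bounds the new product. *)
Lemma clique_stable_product_step (S X Y : {set T}) : (2 <= #|S|)%N -> pure_pair e N S X Y ->
  clique_stable_product X -> clique_stable_product Y -> clique_stable_product S.
Proof.
move=> hS [XS YS dXY hX [hY pp]] [KX [IX [KXs IXs cKX sIX hXr]]] [KY [IY [KYs IYs cKY sIY hYr]]].
have kX := Rpower_ratio N_ge2 (ltnW hS) hX.
have kY := Rpower_ratio N_ge2 (ltnW hS) hY.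
have enough (K I : {set T}) : K \subset S -> I \subset S -> is_clique e K -> is_stable e I ->
    (#|KX| * #|IX| + #|KY| * #|IY| <= #|K| * #|I|)%N -> clique_stable_product S.
  move=> KS IS cK sI hKI; exists K, I; split => //.
  apply: Rle_trans (_ : INR (#|KX| * #|IX| + #|KY| * #|IY|) <= _)%R.
    by rewrite plus_INR; lra.
  by apply: le_INR; apply/leP.
have dK := disjointWl KXs (disjointWr KYs dXY).
have dI := disjointWl IXs (disjointWr IYs dXY).
have subU (A B : {set T}) : A \subset X -> B \subset Y -> A :|: B \subset S.
  by move=> AX BY; rewrite subUset (subset_trans AX XS) (subset_trans BY YS).
case: pp => [cp | ap].
- have cU := clique_setU cp KXs KYs cKX cKY.
  case: (leqP #|IY| #|IX|) => hI.
  + apply: (enough _ IX (subU _ _ KXs KYs) (subset_trans IXs XS) cU sIX).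
    by rewrite card_setU_disjoint //; nia.
  + apply: (enough _ IY (subU _ _ KXs KYs) (subset_trans IYs YS) cU sIY).
    by rewrite card_setU_disjoint //; nia.
- have sU := stable_setU ap IXs IYs sIX sIY.
  case: (leqP #|KY| #|KX|) => hK.
  + apply: (enough KX _ (subset_trans KXs XS) (subU _ _ IXs IYs) cKX sU).
    by rewrite card_setU_disjoint //; nia.
  + apply: (enough KY _ (subset_trans KYs YS) (subU _ _ IXs IYs) cKY sU).
    by rewrite card_setU_disjoint //; nia.
Qed.

Lemma clique_stable_product_all : forall m (S : {set T}), (#|S| <= m)%N -> (1 <= #|S|)%N ->
  clique_stable_product S.
Proof.
elim=> [|m IH] S hm h1; first lia.
case: (leqP #|S| 1) => hS; first by apply: clique_stable_product_singleton; lia.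
have [X [Y pp]] := pure_pairs hS; have [XS YS dXY hX [hY _]] := pp.
have X1 : (1 <= #|X|)%N by move: hX; case: #|X|; rewrite ?muln0 //; lia.
have Y1 : (1 <= #|Y|)%N by move: hY; case: #|Y|; rewrite ?muln0 //; lia.
have cXY : (#|X| + #|Y| <= #|S|)%N by rewrite -card_setU_disjoint // subset_leq_card // subUset XS YS.
by apply: (clique_stable_product_step hS pp); apply: IH; lia.
Qed.

Lemma clique_or_stable (S : {set T}) : (1 <= #|S|)%N ->
  exists Z : {set T}, (is_clique e Z \/ is_stable e Z) /\
    (Rpower (INR #|S|) (eh_exponent N / 2) <= INR #|Z|)%R.
Proof.
move=> h1; have [K [I [_ _ cK sI hKI]]] := clique_stable_product_all (leqnn #|S|) h1.
rewrite mult_INR in hKI.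
set P := Rpower (INR #|S|) (eh_exponent N / 2).
have P0 : (0 < P)%R by rewrite /P /Rpower; apply: exp_pos.
have PP : (P * P = Rpower (INR #|S|) (eh_exponent N))%R.
  by rewrite /P -Rpower_plus; congr Rpower; lra.
case: (leqP #|I| #|K|) => hle.
- exists K; split; first by left.
  apply: (sqrt_le_max P0 (pos_INR #|I|)); first by apply: le_INR; apply/leP.
  by rewrite PP.
- exists I; split; first by right.
  apply: (sqrt_le_max P0 (pos_INR #|K|)); first by apply: le_INR; apply/leP; lia.
  by rewrite PP Rmult_comm.
Qed.

End ErdosHajnal.

Lemma pure_ratio_ge2 k : (0 < k)%N -> (2 <= pure_ratio k)%N.
Proof. by move=> /family_loss_gt0; rewrite /pure_ratio; lia. Qed.

Lemma linear_pure_pair k : (0 < k)%N ->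
  exists c : R, (0 < c)%R /\
    forall (T : finType) (e : rel T),
      simple_graph e -> (2 <= #|T|)%N ->
      ~ contains_induced e (path_rel k) -> ~ contains_induced e (copath_rel k) ->
      exists X Y : {set T},
        [disjoint X & Y] /\
        (c * INR #|T| <= INR #|X|)%R /\ (c * INR #|T| <= INR #|Y|)%R /\
        (complete_pair e X Y \/ anticomplete_pair e X Y).
Proof.
move=> k0; set N := pure_ratio k.
have Npos : (0 < INR N)%R by apply: lt_0_INR; apply/ltP; have := pure_ratio_ge2 k0; lia.
exists (/ INR N)%R; split; first exact: Rinv_0_lt_compat.
move=> T e [esym _] hT hP hcP.
rewrite -cardsT in hT.
have [X [Y [_ _ dXY hX [hY pp]]]] := pure_pair_exists esym k0 hP hcP hT.
have large (Z : {set T}) : (#|[set: T]| <= N * #|Z|)%N -> (/ INR N * INR #|T| <= INR #|Z|)%R.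
  rewrite cardsT => /leP /le_INR; rewrite mult_INR => hZ.
  apply: (Rmult_le_reg_l (INR N)) => //; rewrite -Rmult_assoc Rinv_r; lra.
by exists X, Y; do !split => //; apply: large.
Qed.

Lemma polynomial_clique_or_stable k : (0 < k)%N ->
  exists c' : R, (0 < c')%R /\
    forall (T : finType) (e : rel T),
      simple_graph e -> (1 <= #|T|)%N ->
      ~ contains_induced e (path_rel k) -> ~ contains_induced e (copath_rel k) ->
      exists S : {set T}, (is_clique e S \/ is_stable e S) /\
        (Rpower (INR #|T|) c' <= INR #|S|)%R.
Proof.
move=> k0; have N2 := pure_ratio_ge2 k0.
exists (eh_exponent (pure_ratio k) / 2)%R; split; first by have := eh_exponent_pos N2; lra.
move=> T e [esym eirr] hT hP hcP.
rewrite -cardsT in hT *.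
by have := clique_or_stable esym eirr N2 (pure_pair_exists esym k0 hP hcP) hT.
Qed.

Theorem theorem4 :
  (forall k : nat, (0 < k)%N ->
    exists c : R, (0 < c)%R /\
      forall (T : finType) (e : rel T),
        simple_graph e -> (2 <= #|T|)%N ->
        ~ contains_induced e (path_rel k) -> ~ contains_induced e (copath_rel k) ->
        exists X Y : {set T},
          [disjoint X & Y] /\
          (c * INR #|T| <= INR #|X|)%R /\ (c * INR #|T| <= INR #|Y|)%R /\
          (complete_pair e X Y \/ anticomplete_pair e X Y))
  /\
  (forall k : nat, (0 < k)%N ->
    exists c' : R, (0 < c')%R /\
      forall (T : finType) (e : rel T),
        simple_graph e -> (1 <= #|T|)%N ->
        ~ contains_induced e (path_rel k) -> ~ contains_induced e (copath_rel k) ->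
        exists S : {set T}, (is_clique e S \/ is_stable e S) /\
          (Rpower (INR #|T|) c' <= INR #|S|)%R).
Proof.
split; [exact: linear_pure_pair | exact: polynomial_clique_or_stable].
Qed.
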